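(* Let $(V,\tau)$ be a topological mixed lattice space. Then: (a) the cones $V_p$ and $V_{sp}$ are both closed if and only if $\tau$ is Hausdorff; (b) if $\tau$ is Hausdorff then $V$ is $(\le)$-Archimedean; (c) if $\tau$ is Hausdorff and $(x_n)$ is a $(\le)$-increasing (resp. $(\preccurlyeq)$-increasing) sequence converging to $x$ in $\tau$, then $x$ is the supremum of $\{x_n\}$ with respect to $\le$ (resp. with respect to $\preccurlyeq$); (d) if $\tau$ is locally mixed-full and $A$ is a bounded set, then $MF_1(A)$ and $MF_2(A)$ are bounded; (e) if $\tau$ is locally mixed-full then every mixed-order interval is bounded; in particular every $(\preccurlyeq)$-order interval $\{z: x\preccurlyeq z\preccurlyeq y\}$ is bounded; (f) if $S$ is a mixed lattice subspace of $V$, then its closure $\overline{S}$ is a mixed lattice subspace; (g) the closure of a quasi-ideal is a quasi-ideal, and the closure of a specific ideal is a specific ideal.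
   Context: A mixed lattice vector space $(V,\le,\preccurlyeq)$ is a real vector space $V$ with two partial orderings $\le$ (initial order) and $\preccurlyeq$ (specific order), each making $V$ a partially ordered vector space, with positive cones $V_p=\{x:0\le x\}$, $V_{sp}=\{x:0\preccurlyeq x\}$, such that: (1) for all $x,y$ the elements $x\curlyvee y=\min\{w: w\succcurlyeq x,\ w\ge y\}$ and $x\curlywedge y=\max\{w: w\preccurlyeq x,\ w\le y\}$ exist (min/max with respect to $\le$); (2) $x\preccurlyeq y$ implies $x\le y$; (3) $x\curlyvee y, x\curlywedge y\in V_{sp}$ whenever $x,y\in V_{sp}$. A topological mixed lattice space is such a $V$ with a vector topology $\tau$ making $(x,y)\mapsto x\curlyvee y$ and $(x,y)\mapsto x\curlywedge y$ continuous $V\times V\to V$. $\tau$ is locally mixed-full if every neighborhood of zero contains a neighborhood $W$ of zero with ($y\in W$, $0\preccurlyeq x\le y$) $\Rightarrow x\in W$. $MF_1(A)=\{y: x\preccurlyeq y\le z\text{ for some }x,z\in A\}$, $MF_2(A)=\{y: x\le y\preccurlyeq z\text{ for some }x,z\in A\}$. $V$ is $(\le)$-Archimedean if $nx\le y$ for all $n\in\mathbb N$ implies $x\le 0$. A sequence is $(\le)$-increasing if $x_n\le x_m$ for $n\le m$ (similarly $(\preccurlyeq)$-increasing). Mixed-order intervals are sets $\{x: z\preccurlyeq x\le y\}$ and $\{x: z\le x\preccurlyeq y\}$. A mixed lattice subspace is a linear subspace closed under $\curlyvee$ and $\curlywedge$. A quasi-ideal is a mixed lattice subspace $A$ such that $x\in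 A$ and $0\preccurlyeq y\le x$ imply $y\in A$. A specific ideal is a mixed lattice subspace $A$ such that $x\in A$ and $0\preccurlyeq y\preccurlyeq x$ imply $y\in A$. *)

From HB Require Import structures.
From mathcomp Require Import all_boot all_order all_algebra.
From mathcomp Require Import all_classical all_reals all_analysis.
Set Implicit Arguments. Unset Strict Implicit. Unset Printing Implicit Defensive.
Import Order.TTheory GRing.Theory Num.Theory.
Local Open Scope classical_set_scope.
Local Open Scope ring_scope.

Section MixedLattice.
Variables (R : realType) (V : topologicalLmodType R).

Definition ordered_vector_order (le : V -> V -> Prop) : Prop :=
  [/\ (forall x, le x x),
      (forall x y, le x y -> le y x -> x = y),
      (forall x y z, le x y -> le y z -> le x z),
      (forall x y z, le x y -> le (x + z) (y + z)) &
      (forall (r : R) x y, 0 <= r -> le x y -> le (r *: x) (r *: y))].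

(* (V, le, sle) is a mixed lattice vector space, where [ju x y] is the upper
   mixed envelope x ⋎ y = min_(le) {w | sle x w, le y w} and [mi x y] is the
   lower mixed envelope x ⋏ y = max_(le) {w | sle w x, le w y}. *)
Definition mixed_lattice_space (le sle : V -> V -> Prop) (ju mi : V -> V -> V)
  : Prop :=
  [/\ ordered_vector_order le /\ ordered_vector_order sle,
      (forall x y, [/\ sle x (ju x y), le y (ju x y) &
         forall w, sle x w -> le y w -> le (ju x y) w]),
      (forall x y, [/\ sle (mi x y) x, le (mi x y) y &
         forall w, sle w x -> le w y -> le w (mi x y)]),
      (forall x y, sle x y -> le x y) &
      (forall x y, sle 0 x -> sle 0 y -> sle 0 (ju x y) /\ sle 0 (mi x y))].

Definition mixed_ops_continuous (ju mi : V -> V -> V) : Prop :=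
  continuous (fun p : V * V => ju p.1 p.2) /\
  continuous (fun p : V * V => mi p.1 p.2).

Definition locally_mixed_full (le sle : V -> V -> Prop) : Prop :=
  forall U, nbhs (0 : V) U -> exists W, [/\ nbhs (0 : V) W, W `<=` U &
    forall x y, W y -> sle 0 x -> le x y -> W x].

Definition tvs_bounded (A : set V) : Prop :=
  forall U, nbhs (0 : V) U -> exists r : R, 0 < r /\
    forall t : R, r < t -> A `<=` [set t *: u | u in U].

Definition MF1 (le sle : V -> V -> Prop) (A : set V) : set V :=
  [set y | exists x z, [/\ A x, A z, sle x y & le y z]].
Definition MF2 (le sle : V -> V -> Prop) (A : set V) : set V :=
  [set y | exists x z, [/\ A x, A z, le x y & sle y z]].

Definition le_Archimedean (le : V -> V -> Prop) : Prop :=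
  forall x y, (forall n : nat, le (x *+ n.+1) y) -> le x 0.

Definition is_sup_of (le : V -> V -> Prop) (S : set V) (x : V) : Prop :=
  (forall s, S s -> le s x) /\ (forall w, (forall s, S s -> le s w) -> le x w).

Definition incr_seq_wrt (le : V -> V -> Prop) (u : nat -> V) : Prop :=
  forall n m, (n <= m)%N -> le (u n) (u m).

Definition linear_subspace (S : set V) : Prop :=
  [/\ S 0, (forall x y, S x -> S y -> S (x + y)) &
      (forall (r : R) x, S x -> S (r *: x))].

Definition mixed_lattice_subspace (ju mi : V -> V -> V) (S : set V) : Prop :=
  [/\ linear_subspace S, (forall x y, S x -> S y -> S (ju x y)) &
      (forall x y, S x -> S y -> S (mi x y))].

Definition quasi_ideal (le sle : V -> V -> Prop) (ju mi : V -> V -> V)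
  (A : set V) : Prop :=
  mixed_lattice_subspace ju mi A /\
  forall x y, A x -> sle 0 y -> le y x -> A y.

Definition specific_ideal (sle : V -> V -> Prop) (ju mi : V -> V -> V)
  (A : set V) : Prop :=
  mixed_lattice_subspace ju mi A /\
  forall x y, A x -> sle 0 y -> sle y x -> A y.

End MixedLattice.

From HB Require Import structures.
From mathcomp Require Import all_boot all_order all_algebra.
From mathcomp Require Import all_classical all_reals all_analysis.
Import Order.TTheory GRing.Theory Num.Theory.
Local Open Scope classical_set_scope.
Local Open Scope ring_scope.
Set Implicit Arguments. Unset Strict Implicit.

(** Since 0 <= x iff 0 ⋏ x = 0 and 0 ≼ x iff x ⋏ 0 = 0, in a Hausdorff space
   both cones are preimages of the closed point {0} under continuous maps;
   conversely {0} = V_p ∩ -V_p is closed, which separates points.  The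
   Archimedean property and suprema of monotone limits are then limit
   arguments in a closed cone.  For (d), an element of MF_1(A) is x + (y - x)
   and one of MF_2(A) is z - (z - y), where the increment e satisfies
   0 ≼ e <= z - x, so local mixed-fullness controls it by the difference set
   A - A.  Finally, closures are preserved by the continuous envelope
   operations, and if x lies in the closure of an ideal and 0 ≼ y <= x, then
   y = y ⋏ (0 ⋎ x) (resp. y = (0 ⋎ x) ⋏ y when y ≼ x) is the image of x under
   a continuous map sending the ideal into itself. *)

Section ClosureContinuous.
Context {T U : topologicalType}.

Lemma closure_setX (A : set T) (B : set U) x y :
  closure A x -> closure B y -> closure (A `*` B) (x, y).
Proof.
move=> cA cB N [[P Q] /= [nP nQ] PQN].
have [a [Aa Pa]] := cA _ nP; have [b [Bb Qb]] := cB _ nQ.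
by exists (a, b); split => //; exact: (PQN (a, b)).
Qed.

Lemma continuous_closure (f : T -> U) (A : set T) (B : set U) x :
  {for x, continuous f} -> (forall a, A a -> B (f a)) ->
  closure A x -> closure B (f x).
Proof.
move=> fx AB cA N /fx /cA [a [Aa Na]].
by exists (f a); split => //; exact: AB.
Qed.

End ClosureContinuous.

Section TopologicalModule.
Context {R : realType} {V : topologicalLmodType R}.

Lemma hausdorff_closed_set0 : closed [set (0 : V)] -> hausdorff_space V.
Proof.
move=> cl0 p q pq; apply: contrapT => /eqP; rewrite -subr_eq0 => /eqP pq0.
have : nbhs (p - q) (~` [set 0]).
  by apply: open_nbhs_nbhs; split; [exact: closed_openC | exact: pq0].
move=> /(@sub_continuous _ (p, q)) [[P Q] /= [nP nQ] PQ].
have [z [Pz Qz]] := pq _ _ nP nQ.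
by have := PQ (z, z) (conj Pz Qz); rewrite /= subrr.
Qed.

Lemma cvg_subr (u : nat -> V) (x c : V) :
  u @ \oo --> x -> (fun n => u n - c) @ \oo --> x - c.
Proof.
move=> ux.
apply: (continuous2_cvg _ (h := fun a b : V => a - b)) ux (cvg_cst c).
exact: (@sub_continuous V (x, c)).
Qed.

Lemma cvg_subl (u : nat -> V) (x c : V) :
  u @ \oo --> x -> (fun n => c - u n) @ \oo --> c - x.
Proof.
move=> ux.
apply: (continuous2_cvg _ (h := fun a b : V => a - b)) (cvg_cst c) ux.
exact: (@sub_continuous V (c, x)).
Qed.

Lemma cvg_harmonicZ (y : V) : (fun n => harmonic n *: y) @ \oo --> (0 : V).
Proof.
rewrite -(scale0r y).
apply: (continuous2_cvg _ (h := fun (a : R^o) (b : V) => a *: b)) (cvg_cst y).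
  exact: (@scale_continuous _ _ (0, y)).
exact: cvg_harmonic.
Qed.

Lemma scaler_continuous (r : R) : continuous (fun v : V => r *: v).
Proof.
move=> v.
apply: (@continuous2_cvg _ R^o V V _ _ (fun=> r) id (fun a b => a *: b)).
- exact: (@scale_continuous _ _ (r, v)).
- exact: cvg_cst.
- exact: cvg_id.
Qed.

Lemma nbhs0_add_sub (U : set V) : nbhs 0 U ->
  exists W, nbhs 0 W /\ forall a c, W a -> W c -> U (a + c) /\ U (a - c).
Proof.
move=> nU.
have /(@add_continuous V (0, 0)) [[P Q] /= [nP nQ] PQ] : nbhs ((0 : V) + 0) U.
  by rewrite addr0.
have /(@sub_continuous V (0, 0)) [[P' Q'] /= [nP' nQ'] PQ'] :
    nbhs ((0 : V) - 0) U by rewrite subr0.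
exists (P `&` Q `&` (P' `&` Q')).
split; first by apply: filterI; apply: filterI.
move=> a c [[Pa Qa] [P'a Q'a]] [[Pc Qc] [P'c Q'c]].
by split; [exact: (PQ (a, c)) | exact: (PQ' (a, c))].
Qed.

Lemma subset_tvs_bounded (A B : set V) :
  A `<=` B -> tvs_bounded B -> tvs_bounded A.
Proof.
move=> AB bB U /bB [r [r0 rB]].
by exists r; split => // t /rB tB w /AB /tB.
Qed.

Lemma tvs_bounded_set1 (z : V) : tvs_bounded [set z].
Proof.
move=> U.
rewrite -[X in nbhs X U](scale0r z).
move=> /(@scale_continuous R V (0, z)) [[P Q] /= [nP nQ] PQ].
move: nP => /nbhs_ballP [e /= e0 Pe].
exists e^-1; split; first by rewrite invr_gt0.
move=> t et w ->.
have t0 : 0 < t by apply: lt_trans et; rewrite invr_gt0.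
exists (t^-1 *: z); last by rewrite scalerA mulfV ?gt_eqF // scale1r.
apply: (PQ (t^-1, z)); split; last exact: nbhs_singleton.
apply: Pe; rewrite /ball /= sub0r normrN gtr0_norm ?invr_gt0 //.
by rewrite -[e]invrK ltf_pV2 ?posrE ?invr_gt0.
Qed.

Lemma tvs_boundedU (A B : set V) :
  tvs_bounded A -> tvs_bounded B -> tvs_bounded (A `|` B).
Proof.
move=> bA bB U nU.
have [r1 [r10 rA]] := bA U nU; have [r2 [r20 rB]] := bB U nU.
exists (Num.max r1 r2); split; first by rewrite lt_max r10.
move=> t; rewrite gt_max => /andP[t1 t2] w [Aw|Bw].
- exact: rA t1 _ Aw.
- exact: rB t2 _ Bw.
Qed.

End TopologicalModule.

Section OrderedVectorSpace.
Variables (R : realType) (V : topologicalLmodType R) (le : V -> V -> Prop).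
Hypothesis Ole : ordered_vector_order le.

Lemma ovo_refl x : le x x.
Proof. by case: Ole. Qed.

Lemma ovo_anti x y : le x y -> le y x -> x = y.
Proof. by case: Ole => _ h _ _ _; exact: h. Qed.

Lemma ovo_trans x y z : le x y -> le y z -> le x z.
Proof. by case: Ole => _ _ h _ _; exact: h. Qed.

Lemma ovo_addr x y z : le x y -> le (x + z) (y + z).
Proof. by case: Ole => _ _ _ h _; exact: h. Qed.

Lemma ovo_scale (r : R) x y : 0 <= r -> le x y -> le (r *: x) (r *: y).
Proof. by case: Ole => _ _ _ _ h; exact: h. Qed.

Lemma ovo_subr_ge0 x y : le 0 (y - x) <-> le x y.
Proof.
split => [/(ovo_addr x)|/(ovo_addr (- x))]; first by rewrite add0r subrK.
by rewrite subrr.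
Qed.

Lemma ovo_subl2 x y z : le x y -> le (z - y) (z - x).
Proof.
by move=> /ovo_subr_ge0 xy; apply/ovo_subr_ge0; rewrite opprB addrC addrA subrK.
Qed.

Lemma ovo_closed_set0 : closed [set x | le 0 x] -> closed [set (0 : V)].
Proof.
move=> cl.
have -> : [set (0 : V)] = [set x | le 0 x] `&` (-%R @^-1` [set x | le 0 x]).
  apply/seteqP; split => [x -> /=|x [x0 nx]].
    by rewrite oppr0; split; exact: ovo_refl.
  by apply: ovo_anti => //; apply/ovo_subr_ge0; rewrite sub0r.
apply: closedI => //; apply: preimage_closed => // x _; exact: opp_continuous.
Qed.

Lemma ovo_archimedean : closed [set x | le 0 x] -> le_Archimedean le.
Proof.
move=> cl x y xy; apply/ovo_subr_ge0; rewrite sub0r.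
have := cvg_subr (c := x) (cvg_harmonicZ y); rewrite sub0r => cvg_x.
apply: (closed_cvg _ cl _ _ cvg_x); apply: nearW => n /=; apply/ovo_subr_ge0.
have := ovo_scale (ltW (harmonic_gt0 n)) (xy n).
by rewrite -scaler_nat scalerA mulVf ?scale1r.
Qed.

Lemma ovo_cvg_sup (u : nat -> V) x : closed [set x | le 0 x] ->
  incr_seq_wrt le u -> u @ \oo --> x -> is_sup_of le (range u) x.
Proof.
move=> cl incr ux; split => [_ [n _ <-]|w ub]; apply/ovo_subr_ge0.
  apply: (closed_cvg _ cl _ _ (cvg_subr (c := u n) ux)).
  by exists n => // m /= nm; apply/ovo_subr_ge0; exact: incr.
apply: (closed_cvg _ cl _ _ (cvg_subl (c := w) ux)).
by apply: nearW => m /=; apply/ovo_subr_ge0; apply: ub; exists m.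
Qed.

End OrderedVectorSpace.

Section MixedFull.
Variables (R : realType) (V : topologicalLmodType R) (le sle : V -> V -> Prop).
Hypotheses (Ole : ordered_vector_order le) (Osle : ordered_vector_order sle).

Lemma MF_subset_scale (A P Q W : set V) (t : R) : 0 < t ->
  (forall x y, W y -> sle 0 x -> le x y -> W x) ->
  (forall a b, P a -> P b -> W (b - a)) ->
  (forall a d, P a -> W d -> Q (a + d) /\ Q (a - d)) ->
  A `<=` [set t *: p | p in P] ->
  MF1 le sle A `<=` [set t *: q | q in Q] /\
  MF2 le sle A `<=` [set t *: q | q in Q].
Proof.
move=> t0 Wfull PW PQ AP.
have tK v : t *: (t^-1 *: v) = v by rewrite scalerA mulfV ?gt_eqF // scale1r.
have W_incr x z e : A x -> A z -> sle 0 e -> le e (z - x) -> W (t^-1 *: e).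
  move=> /AP[a Pa <-] /AP[b Pb <-] e0 ez.
  apply: (Wfull _ (b - a)); first exact: PW.
    by rewrite -(scaler0 _ t^-1); apply: ovo_scale; rewrite ?invr_ge0 ?ltW.
  have -> : b - a = t^-1 *: (t *: b - t *: a).
    by rewrite -scalerBr scalerA mulVf ?gt_eqF // scale1r.
  by apply: ovo_scale; rewrite ?invr_ge0 ?ltW.
split => y [x [z [Ax Az xy yz]]].
- have [a Pa xa] := AP x Ax.
  have We : W (t^-1 *: (y - x)).
    by apply: (W_incr x z) => //; [apply/ovo_subr_ge0 | apply: ovo_addr].
  exists (a + t^-1 *: (y - x)); first by have [] := PQ _ _ Pa We.
  by rewrite scalerDr xa tK addrC subrK.
- have [b Pb zb] := AP z Az.
  have We : W (t^-1 *: (z - y)).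
    by apply: (W_incr x z) => //; [apply/ovo_subr_ge0 | apply: ovo_subl2].
  exists (b - t^-1 *: (z - y)); first by have [] := PQ _ _ Pb We.
  by rewrite scalerBr zb tK opprB addrC subrK.
Qed.

Lemma tvs_bounded_MF (A : set V) : locally_mixed_full le sle ->
  tvs_bounded A -> tvs_bounded (MF1 le sle A) /\ tvs_bounded (MF2 le sle A).
Proof.
move=> lmf bA.
suff MFU U : nbhs 0 U -> exists r : R, 0 < r /\ forall t, r < t ->
    MF1 le sle A `<=` [set t *: u | u in U] /\
    MF2 le sle A `<=` [set t *: u | u in U].
  by split => U /MFU [r [r0 rU]]; exists r; split => // t /rU [].
move=> /nbhs0_add_sub [Q [nQ QU]].
have [W [nW WQ Wfull]] := lmf Q nQ.
have [P [nP PW]] := nbhs0_add_sub nW.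
have [r [r0 rA]] := bA (P `&` Q) (filterI nP nQ).
exists r; split => // t rt.
apply: (MF_subset_scale (lt_trans r0 rt) Wfull _ _ (rA t rt)).
- by move=> a b [Pa _] [Pb _]; have [] := PW b a Pb Pa.
- by move=> a d [_ Qa] /WQ Qd; exact: QU.
Qed.

End MixedFull.

Section MixedLatticeSpace.
Variables (R : realType) (V : topologicalLmodType R).
Variables (le sle : V -> V -> Prop) (ju mi : V -> V -> V).
Hypothesis HV : mixed_lattice_space le sle ju mi.

Let Ole : ordered_vector_order le. Proof. by case: HV => -[]. Qed.
Let Osle : ordered_vector_order sle. Proof. by case: HV => -[]. Qed.
Let sle_le x y : sle x y -> le x y. Proof. by case: HV => _ _ _ + _; apply. Qed.

Lemma mi_idl x y : le x y -> mi x y = x.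
Proof.
case: HV => _ _ /(_ x y) [mx my mub] _ _ xy.
by apply: (ovo_anti Ole); [exact: sle_le | apply: mub => //; exact: ovo_refl].
Qed.

Lemma mi_idr x y : sle y x -> mi x y = y.
Proof.
case: HV => _ _ /(_ x y) [mx my mub] _ _ yx.
by apply: (ovo_anti Ole) => //; apply: mub => //; exact: ovo_refl.
Qed.

Lemma ju0_id x : sle 0 x -> ju 0 x = x.
Proof.
case: HV => _ /(_ 0 x) [j0 jx jub] _ _ _ x0.
by apply: (ovo_anti Ole) => //; apply: jub => //; exact: ovo_refl.
Qed.

Lemma ge0E_mi x : le 0 x <-> mi 0 x = 0.
Proof.
split => [|<-]; first exact: mi_idl.
by case: HV => _ _ /(_ 0 x) [].
Qed.

Lemma sge0E_mi x : sle 0 x <-> mi x 0 = 0.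
Proof.
split => [|<-]; first exact: mi_idr.
by case: HV => _ _ /(_ x 0) [].
Qed.

Lemma tvs_bounded_mixed_intervals z y : locally_mixed_full le sle ->
  [/\ tvs_bounded [set x | sle z x /\ le x y],
      tvs_bounded [set x | le z x /\ sle x y] &
      tvs_bounded [set x | sle z x /\ sle x y]].
Proof.
move=> lmf.
have [bMF1 bMF2] := tvs_bounded_MF Ole Osle lmf
  (tvs_boundedU (tvs_bounded_set1 z) (tvs_bounded_set1 y)).
have bI1 : tvs_bounded [set x | sle z x /\ le x y].
  apply: subset_tvs_bounded bMF1 => x [zx xy].
  by exists z, y; split; by [left|right|].
split => //.
  apply: subset_tvs_bounded bMF2 => x [zx xy].
  by exists z, y; split; by [left|right|].
by apply: subset_tvs_bounded bI1 => x [zx xy]; split => //; exact: sle_le.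
Qed.

Hypothesis Htop : mixed_ops_continuous ju mi.

Lemma mi_continuous (f g : V -> V) : continuous f -> continuous g ->
  continuous (fun a => mi (f a) (g a)).
Proof.
case: Htop => _ cmi fc gc a.
exact: (continuous2_cvg _ (h := mi)) (cmi (f a, g a)) (fc a) (gc a).
Qed.

Lemma ju_continuous (f g : V -> V) : continuous f -> continuous g ->
  continuous (fun a => ju (f a) (g a)).
Proof.
case: Htop => cju _ fc gc a.
exact: (continuous2_cvg _ (h := ju)) (cju (f a, g a)) (fc a) (gc a).
Qed.

Lemma closed_ge0 : hausdorff_space V -> closed [set x | le 0 x].
Proof.
move=> HsV; have -> : [set x | le 0 x] = (mi 0) @^-1` [set 0].
  by apply/seteqP; split => x /ge0E_mi.
apply: preimage_closed; last exact/accessible_closed_set1/hausdorff_accessible.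
by move=> x _; apply: mi_continuous => // ?; [exact: cvg_cst | exact: cvg_id].
Qed.

Lemma closed_sge0 : hausdorff_space V -> closed [set x | sle 0 x].
Proof.
move=> HsV; have -> : [set x | sle 0 x] = (mi^~ 0) @^-1` [set 0].
  by apply/seteqP; split => x /sge0E_mi.
apply: preimage_closed; last exact/accessible_closed_set1/hausdorff_accessible.
by move=> x _; apply: mi_continuous => // ?; [exact: cvg_id | exact: cvg_cst].
Qed.

Lemma closure_mixed_lattice_subspace (S : set V) :
  mixed_lattice_subspace ju mi S -> mixed_lattice_subspace ju mi (closure S).
Proof.
have [cju cmi] := Htop.
have closure2 (f : V * V -> V) : continuous f ->
    (forall x y, S x -> S y -> S (f (x, y))) ->
    forall x y, closure S x -> closure S y -> closure S (f (x, y)).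
  move=> fc fS x y Sx Sy.
  apply: (continuous_closure (fc (x, y))) (closure_setX Sx Sy).
  by move=> [a b] [Sa Sb]; exact: fS.
move=> [[S0 SD SZ] Sju Smi]; split; first split.
- exact: subset_closure S0.
- exact: closure2 _ add_continuous SD.
- move=> r x Sx; apply: (continuous_closure (@scaler_continuous _ _ r x)) Sx.
  exact: SZ.
- exact: closure2 _ cju Sju.
- exact: closure2 _ cmi Smi.
Qed.

Lemma closure_quasi_ideal (A : set V) :
  quasi_ideal le sle ju mi A -> quasi_ideal le sle ju mi (closure A).
Proof.
move=> [mA Asolid]; split; first exact: closure_mixed_lattice_subspace.
have [[A0 _ _] Aju _] := mA.
have [_ Hju Hmi _ Hpos] := HV.
move=> x y Ax y0 yx.
have -> : y = mi y (ju 0 x).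
  by rewrite mi_idl //; apply: ovo_trans yx _ => //; have [] := Hju 0 x.
have approx_cont : continuous (fun a => mi y (ju 0 a)).
  apply: mi_continuous; first exact: cst_continuous.
  by apply: ju_continuous => [|?]; [exact: cst_continuous | exact: cvg_id].
apply: (continuous_closure (approx_cont x)) Ax => a Aa.
have [ja _ _] := Hju 0 a; have [_ mja _] := Hmi y (ju 0 a).
apply: (Asolid (ju 0 a)) mja; first exact: Aju A0 Aa.
by have [] := Hpos _ _ y0 ja.
Qed.

Lemma closure_specific_ideal (A : set V) :
  specific_ideal sle ju mi A -> specific_ideal sle ju mi (closure A).
Proof.
move=> [mA Asolid]; split; first exact: closure_mixed_lattice_subspace.
have [[A0 _ _] Aju _] := mA.
have [_ Hju Hmi _ Hpos] := HV.
move=> x y Ax y0 yx.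
have -> : y = mi (ju 0 x) y by rewrite ju0_id ?mi_idr //; exact: ovo_trans yx.
have approx_cont : continuous (fun a => mi (ju 0 a) y).
  apply: mi_continuous; last exact: cst_continuous.
  by apply: ju_continuous => [|?]; [exact: cst_continuous | exact: cvg_id].
apply: (continuous_closure (approx_cont x)) Ax => a Aa.
have [ja _ _] := Hju 0 a; have [mja _ _] := Hmi (ju 0 a) y.
apply: (Asolid (ju 0 a)) mja; first exact: Aju A0 Aa.
by have [] := Hpos _ _ ja y0.
Qed.

End MixedLatticeSpace.

Theorem theorem3p16 (R : realType) (V : topologicalLmodType R)
  (le sle : V -> V -> Prop) (ju mi : V -> V -> V)
  (HV : mixed_lattice_space le sle ju mi)
  (Htop : mixed_ops_continuous ju mi) :
  (* (a) *)
  ((closed [set x | le 0 x] /\ closed [set x | sle 0 x]) <-> hausdorff_space V)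
  (* (b) *)
  /\ (hausdorff_space V -> le_Archimedean le)
  (* (c) *)
  /\ (hausdorff_space V -> forall (u : nat -> V) (x : V), u @ \oo --> x ->
        (incr_seq_wrt le u -> is_sup_of le (range u) x) /\
        (incr_seq_wrt sle u -> is_sup_of sle (range u) x))
  (* (d) *)
  /\ (locally_mixed_full le sle -> forall A : set V, tvs_bounded A ->
        tvs_bounded (MF1 le sle A) /\ tvs_bounded (MF2 le sle A))
  (* (e) *)
  /\ (locally_mixed_full le sle -> forall z y : V,
        [/\ tvs_bounded [set x | sle z x /\ le x y],
            tvs_bounded [set x | le z x /\ sle x y] &
            tvs_bounded [set x | sle z x /\ sle x y]])
  (* (f) *)
  /\ (forall S : set V, mixed_lattice_subspace ju mi S ->
        mixed_lattice_subspace ju mi (closure S))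
  (* (g) *)
  /\ (forall A : set V, quasi_ideal le sle ju mi A ->
        quasi_ideal le sle ju mi (closure A))
  /\ (forall A : set V, specific_ideal sle ju mi A ->
        specific_ideal sle ju mi (closure A)).
Proof.
have [[Ole Osle] _ _ _ _] := HV.
have closed_cones (HsV : hausdorff_space V) :
    closed [set x | le 0 x] /\ closed [set x | sle 0 x].
  by split; [exact: closed_ge0 HV Htop HsV | exact: closed_sge0 HV Htop HsV].
split.
  split => [[cl _]|]; last exact: closed_cones.
  exact/hausdorff_closed_set0/(ovo_closed_set0 Ole).
split; first by move=> /closed_cones [cl _]; exact: ovo_archimedean.
split.
  by move=> /closed_cones [cl scl] u x ux; split => incr; exact: ovo_cvg_sup.
split; first by move=> lmf A; exact: tvs_bounded_MF.
split; first by move=> lmf z y; exact: tvs_bounded_mixed_intervals HV z y lmf.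
split; first exact: closure_mixed_lattice_subspace Htop.
split; first exact: closure_quasi_ideal HV Htop.
exact: closure_specific_ideal HV Htop.
Qed.
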